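(* Let $n\ge 0$ and $\alpha\ge 1$ be integers, $N=2^{n+1}$, $c=2^{\alpha}+1$, and consider the 1D-Tree and the $c$-DAG over the uniform dataset $\{0,\dots,N-1\}$ (as described in the context). For query length $s=1$, $\mathbb{E}_{\mathcal{I}_1}[\mathrm{level}_{c\text{-DAG}}(Q)-\mathrm{level}_{\mathrm{Tree}}(Q)]=0$. For every real $s$ with $1<s\le N$, \[ \mathbb{E}_{\mathcal{I}_s}\bigl[\mathrm{level}_{c\text{-DAG}}(Q)-\mathrm{level}_{\mathrm{Tree}}(Q)\bigr]<2\cdot\frac{c-2}{c-1}. \]
   Context: The 1D-Tree over $\mathcal{D}=\{0,\dots,N-1\}\subset[0,N)$ has levels $\ell=0,\dots,n+1$; its level-$\ell$ nodes are the intervals $[m2^{n-\ell+1},(m+1)2^{n-\ell+1})$, $m=0,\dots,2^\ell-1$. The $c$-DAG over $\mathcal{D}$ has levels $\ell=0,\dots,n+1$; with $u_\ell=2^{n-\ell+1}/(c-1)$, its level-$\ell$ nodes are the intervals $[mu_\ell,\,mu_\ell+2^{n-\ell+1})$, $m=0,1,\dots,(c-1)2^\ell-(c-1)$ (a node $[a,a+L)$ has children $[a+jL/(2(c-1)),\,a+jL/(2(c-1))+L/2)$, $j=0,\dots,c-1$). SRC-search returns a node of the deepest level whose interval contains the query $Q$; $\mathrm{level}_{\mathrm{Tree}}(Q)$ (resp. $\mathrm{level}_{c\text{-DAG}}(Q)$) is the largest $\ell$ such that some level-$\ell$ node of the respective structure contains $Q$. For query length $s$, $\mathcal{I}_s$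 is the distribution of $Q=[x,x+s)$ with $x$ uniform on $[0,N-s]$ (for $s=N$, $x=0$); for $s=1$ queries are single data points, i.e. $x$ uniform on the integers $\{0,\dots,N-1\}$. *)

From Stdlib Require Import Reals Lra Lia List.
From Coquelicot Require Import Coquelicot.
Import ListNotations.
Open Scope R_scope.

Definition contains (a L x s : R) : bool :=
  if Rle_dec a x then (if Rle_dec (x + s) (a + L) then true else false) else false.

Definition node_len (n l : nat) : R := 2 ^ (n + 1 - l).

Definition tree_hit (n l : nat) (x s : R) : bool :=
  existsb (fun m => contains (INR m * node_len n l) (node_len n l) x s)
          (seq 0 (2 ^ l)).

Definition dag_hit (c n l : nat) (x s : R) : bool :=
  existsb (fun m => contains (INR m * (node_len n l / (INR c - 1))) (node_len n l) x s)
          (seq 0 ((c - 1) * 2 ^ l - (c - 1) + 1)%nat).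

Definition max_level (n : nat) (hit : nat -> bool) : nat :=
  fold_left (fun acc l => if hit l then Nat.max acc l else acc) (seq 0 (n + 2)) 0%nat.

Definition level_tree (n : nat) (x s : R) : nat := max_level n (fun l => tree_hit n l x s).
Definition level_dag (c n : nat) (x s : R) : nat := max_level n (fun l => dag_hit c n l x s).

Definition level_diff (c n : nat) (x s : R) : R :=
  INR (level_dag c n x s) - INR (level_tree n x s).

Definition NN (n : nat) : R := 2 ^ (n + 1).

Definition expect_I1 (c n : nat) : R :=
  sum_f_R0 (fun i => level_diff c n (INR i) 1) (2 ^ (n + 1) - 1)%nat / NN n.

Definition expect_Is (c n : nat) (s : R) : R :=
  if Req_EM_T s (NN n) then level_diff c n 0 s
  else RInt (fun x => level_diff c n x s) 0 (NN n - s) / (NN n - s).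

(* Let k be the deepest level whose nodes are at least as long as s, i.e.
   2^(n-k) < s <= 2^(n+1-k); deeper nodes cannot contain Q, so both levels are
   at most k (and both vanish when k = 0).  The tree level is at least the number
   of levels 1..k at which Q lies in a tree node; the DAG level is at most k, and
   at most k - 1 unless Q lies in a level-k DAG node.  For x uniform on [0, N - s],
   Q lies in a given node [a, a + L) for a set of x of measure L - s, so
   integrating these indicator bounds yields two explicit upper bounds on the
   expectation, and one of them is always below 2 (c-2)/(c-1).  For s = 1 both
   levels equal n + 1, since every data point is a unit-length leaf of both
   structures. *)

From Stdlib Require Import Reals Lra Lia List Psatz.
From Coquelicot Require Import Coquelicot.
Import ListNotations.
Open Scope R_scope.

Definition b2R (b : bool) : R := if b then 1 else 0.

Lemma b2R_bounds b : 0 <= b2R b <= 1.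
Proof. destruct b; simpl; lra. Qed.

Fixpoint rsum (l : list nat) (g : nat -> R) : R :=
  match l with [] => 0 | m :: l' => g m + rsum l' g end.

Lemma rsum_ext l g h : (forall m, In m l -> g m = h m) -> rsum l g = rsum l h.
Proof.
  induction l as [|a l IH]; simpl; intros H; [lra|].
  rewrite H, IH by auto; lra.
Qed.

Lemma rsum_const l C : rsum l (fun _ => C) = INR (length l) * C.
Proof. induction l as [|a l IH]; [simpl; lra|]. simpl length; rewrite S_INR; simpl; lra. Qed.

Lemma rsum_eq0 l g : (forall m, In m l -> g m = 0) -> rsum l g = 0.
Proof. intros H; rewrite (rsum_ext l g (fun _ => 0)), rsum_const by auto; lra. Qed.

Lemma rsum_nonneg l g : (forall m, 0 <= g m) -> 0 <= rsum l g.
Proof. intros H; induction l as [|a l IH]; simpl; [lra|specialize (H a); lra]. Qed.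

Lemma rsum_app l1 l2 g : rsum (l1 ++ l2) g = rsum l1 g + rsum l2 g.
Proof. induction l1; simpl; lra. Qed.

Lemma b2R_existsb_le f l : b2R (existsb f l) <= rsum l (fun m => b2R (f m)).
Proof.
  induction l as [|a l IH]; simpl; [lra|].
  pose proof (rsum_nonneg l (fun m => b2R (f m)) (fun m => proj1 (b2R_bounds (f m)))).
  destruct (f a); simpl; lra.
Qed.

Lemma b2R_existsb_eq f l : NoDup l ->
  (forall m m', In m l -> In m' l -> f m = true -> f m' = true -> m = m') ->
  b2R (existsb f l) = rsum l (fun m => b2R (f m)).
Proof.
  induction l as [|a l IH]; simpl; intros Hnd Huniq; [lra|].
  apply NoDup_cons_iff in Hnd as [Ha Hnd].
  destruct (f a) eqn:Efa; simpl.
  - rewrite rsum_eq0; [lra|].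
    intros m Hm; destruct (f m) eqn:Efm; [|reflexivity].
    exfalso; apply Ha; rewrite <- (Huniq m a); auto.
  - rewrite IH; auto; lra.
Qed.

Lemma rsum_b2R_le (hit : nat -> bool) k M :
  (forall l, (l <= k)%nat -> hit l = true -> (l <= M)%nat) ->
  rsum (seq 1 k) (fun l => b2R (hit l)) <= INR M.
Proof.
  intros Hhit.
  enough (rsum (seq 1 k) (fun l => b2R (hit l)) <= INR (Nat.min k M))
    by (pose proof (le_INR _ _ (Nat.le_min_r k M)); lra).
  induction k as [|k IH]; [simpl; lra|].
  rewrite seq_S, rsum_app; simpl rsum.
  specialize (IH (fun l Hl => Hhit l ltac:(lia))).
  change (1 + k)%nat with (S k); destruct (hit (S k)) eqn:E; simpl b2R.
  - specialize (Hhit (S k) (le_n _) E).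
    replace (Nat.min (S k) M) with (S k) by lia; rewrite S_INR.
    pose proof (le_INR _ _ (Nat.le_min_l k M)); lra.
  - pose proof (le_INR (Nat.min k M) (Nat.min (S k) M) ltac:(lia)); lra.
Qed.

Lemma is_RInt_const_R (a b C : R) : is_RInt (fun _ => C) a b ((b - a) * C).
Proof. exact (is_RInt_const a b C). Qed.

Lemma is_RInt_rsum (l : list nat) (F : nat -> R -> R) (I : nat -> R) a b :
  (forall m, In m l -> is_RInt (F m) a b (I m)) ->
  is_RInt (fun x => rsum l (fun m => F m x)) a b (rsum l I).
Proof.
  induction l as [|m l IH]; intros H; simpl.
  - pose proof (is_RInt_const_R a b 0) as H0; rewrite Rmult_0_r in H0; exact H0.
  - apply (is_RInt_plus (V := R_NormedModule)); auto with datatypes.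
Qed.

Lemma RInt_le_is_RInt f g a b I : a <= b -> ex_RInt f a b -> is_RInt g a b I ->
  (forall x, a < x < b -> f x <= g x) -> RInt f a b <= I.
Proof.
  intros Hab Hf Hg Hfg; rewrite <- (is_RInt_unique g a b I Hg).
  apply RInt_le; auto; now exists I.
Qed.

Lemma ex_RInt_step (f : R -> R) (P : list R) a b : a <= b ->
  (forall x y, a < x -> x <= y -> y < b -> (forall p, In p P -> ~ (x <= p <= y)) -> f x = f y) ->
  ex_RInt f a b.
Proof.
  revert a b; induction P as [|p P IH]; intros a b Hab Hconst.
  - apply ex_RInt_ext with (fun _ => f ((a + b) / 2)); [|apply ex_RInt_const].
    intros x Hx; rewrite Rmin_left, Rmax_right in Hx by lra.
    destruct (Rle_dec x ((a + b) / 2)); [symmetry|]; apply Hconst; simpl; intuition lra.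
  - assert (Hsub : forall a' b', a <= a' <= b' -> b' <= b -> ~ (a' < p < b') -> ex_RInt f a' b').
    { intros a' b' Ha' Hb' Hp; apply IH; [lra|].
      intros x y Hx Hxy Hy HP; apply Hconst; try lra.
      intros p' [<-|Hp']; [lra|auto]. }
    destruct (Rlt_dec a p); destruct (Rlt_dec p b);
      try (apply Hsub; lra).
    apply ex_RInt_Chasles with p; apply Hsub; lra.
Qed.

Lemma contains_iff a L x s : contains a L x s = true <-> a <= x <= a + L - s.
Proof.
  unfold contains; destruct (Rle_dec a x), (Rle_dec (x + s) (a + L));
    split; intros H; try discriminate; try reflexivity; lra.
Qed.

Lemma contains_len a L x s : contains a L x s = true -> s <= L.
Proof. rewrite contains_iff; lra. Qed.

Lemma contains_same a L x y s : x <= y -> ~ (x <= a <= y) -> ~ (x <= a + L - s <= y) ->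
  contains a L x s = contains a L y s.
Proof.
  intros Hxy Ha Hb.
  destruct (contains a L x s) eqn:Ex, (contains a L y s) eqn:Ey; auto; exfalso.
  - apply contains_iff in Ex.
    assert (~ (a <= y <= a + L - s)) by (rewrite <- contains_iff; congruence); lra.
  - apply contains_iff in Ey.
    assert (~ (a <= x <= a + L - s)) by (rewrite <- contains_iff; congruence); lra.
Qed.

Lemma is_RInt_b2R_contains a L s M : 0 <= a -> s <= L -> a + L - s <= M ->
  is_RInt (fun x => b2R (contains a L x s)) 0 M (L - s).
Proof.
  intros Ha HL HM.
  assert (Hpiece : forall u v C, u <= v ->
    (forall x, u < x < v -> b2R (contains a L x s) = C) ->
    is_RInt (fun x => b2R (contains a L x s)) u v ((v - u) * C)).
  { intros u v C Huv HC; apply is_RInt_ext with (fun _ => C); [|apply is_RInt_const_R].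
    intros x Hx; symmetry; apply HC; rewrite Rmin_left, Rmax_right in Hx by lra; exact Hx. }
  assert (Hin : forall x, a <= x <= a + L - s -> b2R (contains a L x s) = 1)
    by (intros x Hx; apply contains_iff in Hx; now rewrite Hx).
  assert (Hout : forall x, ~ (a <= x <= a + L - s) -> b2R (contains a L x s) = 0)
    by (intros x Hx; rewrite <- contains_iff in Hx; now destruct (contains a L x s)).
  replace (L - s) with ((a - 0) * 0 + (a + L - s - a) * 1 + (M - (a + L - s)) * 0) by ring.
  apply (is_RInt_Chasles (V := R_NormedModule)) with (a + L - s);
    [apply (is_RInt_Chasles (V := R_NormedModule)) with a|];
    apply Hpiece; try lra; intros x Hx; [apply Hout|apply Hin|apply Hout]; lra.
Qed.

Lemma node_len_pos n l : 0 < node_len n l.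
Proof. apply pow_lt; lra. Qed.

Lemma node_len_anti n l l' : (l <= l')%nat -> node_len n l' <= node_len n l.
Proof. intros; apply Rle_pow; [lra|lia]. Qed.

Lemma pow2_mul_node_len n l : (l <= n + 1)%nat -> 2 ^ l * node_len n l = NN n.
Proof. intros; unfold node_len, NN; rewrite <- pow_add; f_equal; lia. Qed.

Lemma exists_fitting_level n s : 1 < s -> s <= NN n ->
  exists k, (k <= n)%nat /\ node_len n (S k) < s <= node_len n k.
Proof.
  revert s; induction n as [|n IH]; intros s H1 H2.
  - exists 0%nat; split; [lia|]; split; [exact H1|exact H2].
  - destruct (Rle_dec s (NN n)) as [Hs|Hs].
    + destruct (IH s H1 Hs) as [k [Hk Hsk]]; exists (S k); split; [lia|exact Hsk].
    + exists 0%nat; split; [lia|].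
      unfold node_len, NN in *; rewrite Nat.sub_0_r; simpl Nat.sub; rewrite Nat.sub_0_r; lra.
Qed.

Section MaxLevel.

Variable n : nat.

Lemma fold_max_le (hit : nat -> bool) L acc B :
  (fold_left (fun acc l => if hit l then Nat.max acc l else acc) L acc <= B)%nat <->
  (acc <= B)%nat /\ (forall l, In l L -> hit l = true -> (l <= B)%nat).
Proof.
  revert acc; induction L as [|a L IH]; intros acc; simpl.
  - intuition.
  - rewrite IH; destruct (hit a) eqn:E; split.
    + intros [H1 H2]; split; [lia|]; intros l [<-|Hl] Hh; [lia|auto].
    + intros [H1 H2]; split; [specialize (H2 a (or_introl eq_refl) E); lia|auto].
    + intros [H1 H2]; split; [lia|]; intros l [<-|Hl] Hh; [congruence|auto].
    + intros [H1 H2]; auto.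
Qed.

Lemma max_level_le_iff hit B : (max_level n hit <= B)%nat <->
  (forall l, (l <= n + 1)%nat -> hit l = true -> (l <= B)%nat).
Proof.
  unfold max_level; rewrite fold_max_le; split.
  - intros [_ H] l Hl; apply H, in_seq; lia.
  - intros H; split; [lia|]; intros l Hl; apply in_seq in Hl; apply H; lia.
Qed.

Lemma max_level_ge hit l : (l <= n + 1)%nat -> hit l = true -> (l <= max_level n hit)%nat.
Proof. intros; now apply (max_level_le_iff hit (max_level n hit)). Qed.

Lemma max_level_le_of_false hit k : (forall l, (k < l <= n + 1)%nat -> hit l = false) ->
  (max_level n hit <= k)%nat.
Proof.
  intros H; apply max_level_le_iff; intros l Hl Hh.
  destruct (Nat.le_gt_cases l k); [assumption|].
  rewrite H in Hh by lia; discriminate.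
Qed.

Lemma max_level_top hit : hit (n + 1)%nat = true -> max_level n hit = (n + 1)%nat.
Proof.
  intros; apply Nat.le_antisymm; [apply max_level_le_iff; auto|apply max_level_ge; auto].
Qed.

Lemma max_level_ext h1 h2 : (forall l, (l <= n + 1)%nat -> h1 l = h2 l) ->
  max_level n h1 = max_level n h2.
Proof.
  intros H; apply Nat.le_antisymm; apply max_level_le_iff; intros l Hl Hh;
    apply max_level_ge; auto; [rewrite <- H | rewrite H]; auto.
Qed.

End MaxLevel.

Definition tree_count (n l : nat) (x s : R) : R :=
  rsum (seq 0 (2 ^ l)) (fun m => b2R (contains (INR m * node_len n l) (node_len n l) x s)).

Definition dag_count (c n l : nat) (x s : R) : R :=
  rsum (seq 0 ((c - 1) * 2 ^ l - (c - 1) + 1))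
    (fun m => b2R (contains (INR m * (node_len n l / (INR c - 1))) (node_len n l) x s)).

Lemma b2R_tree_hit n l x s : 0 < s -> b2R (tree_hit n l x s) = tree_count n l x s.
Proof.
  intros Hs; apply b2R_existsb_eq; [apply seq_NoDup|].
  intros m m' _ _ H H'; apply contains_iff in H, H'.
  pose proof (node_len_pos n l).
  assert (INR m < INR m' + 1 /\ INR m' < INR m + 1) as [Hlt Hlt'] by (split; nra).
  rewrite <- S_INR in Hlt, Hlt'; apply INR_lt in Hlt, Hlt'; lia.
Qed.

Lemma b2R_dag_hit_le c n l x s : b2R (dag_hit c n l x s) <= dag_count c n l x s.
Proof. apply b2R_existsb_le. Qed.

Lemma tree_hit_short n l x s : node_len n l < s -> tree_hit n l x s = false.
Proof.
  intros Hs; apply Bool.not_true_iff_false; intros H.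
  apply existsb_exists in H as [m [_ Hm]]; apply contains_len in Hm; lra.
Qed.

Lemma dag_hit_short c n l x s : node_len n l < s -> dag_hit c n l x s = false.
Proof.
  intros Hs; apply Bool.not_true_iff_false; intros H.
  apply existsb_exists in H as [m [_ Hm]]; apply contains_len in Hm; lra.
Qed.

Section LevelBounds.

Variables (c n k : nat) (x s : R).
Hypothesis too_long : node_len n (S k) < s.

Lemma too_long_above l : (k < l)%nat -> node_len n l < s.
Proof. intros Hl; pose proof (node_len_anti n _ _ Hl); lra. Qed.

Lemma level_tree_le : (level_tree n x s <= k)%nat.
Proof.
  apply max_level_le_of_false; intros l Hl.
  apply tree_hit_short, too_long_above; lia.
Qed.

Lemma level_dag_le : (level_dag c n x s <= k)%nat.
Proof.
  apply max_level_le_of_false; intros l Hl.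
  apply dag_hit_short, too_long_above; lia.
Qed.

Lemma level_dag_le_pred : (1 <= k)%nat ->
  INR (level_dag c n x s) <= INR k - 1 + b2R (dag_hit c n k x s).
Proof.
  intros Hk; destruct (dag_hit c n k x s) eqn:Ek; simpl b2R.
  - pose proof (le_INR _ _ level_dag_le); lra.
  - enough (level_dag c n x s <= k - 1)%nat as H
      by (apply le_INR in H; rewrite minus_INR in H by lia; simpl in H; lra).
    apply max_level_le_of_false; intros l Hl.
    destruct (Nat.eq_dec l k) as [->|]; [exact Ek|].
    apply dag_hit_short, too_long_above; lia.
Qed.

End LevelBounds.

Lemma level_tree_ge n k x s : (k <= n + 1)%nat -> 0 < s ->
  rsum (seq 1 k) (fun l => tree_count n l x s) <= INR (level_tree n x s).
Proof.
  intros Hk Hs.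
  rewrite <- (rsum_ext _ (fun l => b2R (tree_hit n l x s))) by (intros; apply b2R_tree_hit, Hs).
  apply rsum_b2R_le; intros l Hl Hhit.
  apply (max_level_ge n (fun l => tree_hit n l x s)); [lia|exact Hhit].
Qed.

Lemma INR_pow2 l : INR (2 ^ l) = 2 ^ l.
Proof. rewrite pow_INR; reflexivity. Qed.

Lemma INR_dag_width c l : (1 <= c)%nat ->
  INR ((c - 1) * 2 ^ l - (c - 1) + 1) = (INR c - 1) * 2 ^ l - (INR c - 1) + 1.
Proof.
  intros Hc; assert (1 <= 2 ^ l)%nat by (apply Nat.le_succ_l, Nat.neq_0_lt_0, Nat.pow_nonzero; lia).
  rewrite plus_INR, !minus_INR, mult_INR, minus_INR, INR_pow2 by nia; simpl; ring.
Qed.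

Lemma is_RInt_tree_count n l s : (l <= n + 1)%nat -> 0 < s <= node_len n l ->
  is_RInt (fun x => tree_count n l x s) 0 (NN n - s) (NN n - 2 ^ l * s).
Proof.
  intros Hl Hs.
  replace (NN n - 2 ^ l * s) with (rsum (seq 0 (2 ^ l)) (fun _ => node_len n l - s))
    by (rewrite rsum_const, length_seq, INR_pow2, <- (pow2_mul_node_len n l Hl); ring).
  apply is_RInt_rsum; intros m Hm; apply in_seq in Hm.
  pose proof (node_len_pos n l).
  apply is_RInt_b2R_contains; [apply Rmult_le_pos; [apply pos_INR|lra]|lra|].
  assert (INR m + 1 <= 2 ^ l) by (rewrite <- S_INR, <- INR_pow2; apply le_INR; lia).
  rewrite <- (pow2_mul_node_len n l Hl); nra.
Qed.

Lemma rsum_pow2 N s k : rsum (seq 1 k) (fun l => N - 2 ^ l * s) = INR k * N - s * (2 * 2 ^ k - 2).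
Proof.
  induction k as [|k IH]; [simpl; ring|].
  rewrite seq_S, rsum_app, IH, S_INR; simpl; ring.
Qed.

Lemma is_RInt_tree_levels n k s : (k <= n + 1)%nat -> 0 < s <= node_len n k ->
  is_RInt (fun x => rsum (seq 1 k) (fun l => tree_count n l x s)) 0 (NN n - s)
    (INR k * NN n - s * (2 * 2 ^ k - 2)).
Proof.
  intros Hk Hs; rewrite <- rsum_pow2.
  apply is_RInt_rsum; intros l Hl; apply in_seq in Hl.
  pose proof (node_len_anti n l k ltac:(lia)).
  apply is_RInt_tree_count; [lia|lra].
Qed.

Lemma is_RInt_dag_count c n l s : (2 <= c)%nat -> (l <= n + 1)%nat -> 0 < s <= node_len n l ->
  is_RInt (fun x => dag_count c n l x s) 0 (NN n - s)
    (((INR c - 1) * 2 ^ l - (INR c - 1) + 1) * (node_len n l - s)).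
Proof.
  intros Hc Hl Hs.
  rewrite <- INR_dag_width by lia.
  rewrite <- (length_seq ((c - 1) * 2 ^ l - (c - 1) + 1) 0), <- rsum_const.
  apply is_RInt_rsum; intros m Hm; apply in_seq in Hm.
  set (q := INR c - 1) in *; set (L := node_len n l) in *.
  assert (Hq : 1 <= q) by (apply le_INR in Hc; unfold q; simpl in Hc; lra).
  assert (HL : 0 < L) by apply node_len_pos.
  assert (Hm' : INR m <= q * 2 ^ l - q).
  { assert (Hw : INR (S m) <= INR ((c - 1) * 2 ^ l - (c - 1) + 1)) by (apply le_INR; lia).
    rewrite S_INR, INR_dag_width in Hw by lia; unfold q; lra. }
  apply is_RInt_b2R_contains.
  - apply Rmult_le_pos; [apply pos_INR|apply Rdiv_le_0_compat; lra].
  - lra.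
  - rewrite <- (pow2_mul_node_len n l Hl); fold L.
    enough (INR m * (L / q) <= (2 ^ l - 1) * L) by lra.
    replace ((2 ^ l - 1) * L) with ((q * 2 ^ l - q) * (L / q)) by (field; lra).
    apply Rmult_le_compat_r; [apply Rdiv_le_0_compat|]; lra.
Qed.

Lemma existsb_contains_same (start : nat -> R) L ms x y s : x <= y ->
  (forall m p, In m ms -> In p [start m; start m + L - s] -> ~ (x <= p <= y)) ->
  existsb (fun m => contains (start m) L x s) ms = existsb (fun m => contains (start m) L y s) ms.
Proof.
  intros Hxy Hgap; induction ms as [|m ms IH]; [reflexivity|]; simpl.
  rewrite (contains_same (start m) L x y s Hxy); try (apply (Hgap m); simpl; auto).
  rewrite IH; [reflexivity|]; intros m' p Hm'; apply Hgap; simpl; auto.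
Qed.

Definition breakpoints (c n : nat) (s : R) : list R :=
  flat_map (fun l =>
    flat_map (fun m => let a := INR m * node_len n l in [a; a + node_len n l - s])
      (seq 0 (2 ^ l)) ++
    flat_map (fun m => let a := INR m * (node_len n l / (INR c - 1)) in [a; a + node_len n l - s])
      (seq 0 ((c - 1) * 2 ^ l - (c - 1) + 1)))
  (seq 0 (n + 2)).

Lemma level_diff_same c n s x y : x <= y ->
  (forall p, In p (breakpoints c n s) -> ~ (x <= p <= y)) ->
  level_diff c n x s = level_diff c n y s.
Proof.
  intros Hxy Hgap; unfold level_diff, level_dag, level_tree.
  assert (Hlevel : forall l, (l <= n + 1)%nat ->
    tree_hit n l x s = tree_hit n l y s /\ dag_hit c n l x s = dag_hit c n l y s).
  { intros l Hl; split; apply existsb_contains_same; auto; intros m p Hm Hp; apply Hgap;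
      apply in_flat_map; exists l; (split; [apply in_seq; lia|]); apply in_or_app;
      [left|right]; apply in_flat_map; exists m; auto. }
  rewrite (max_level_ext n (fun l => tree_hit n l x s) (fun l => tree_hit n l y s)),
    (max_level_ext n (fun l => dag_hit c n l x s) (fun l => dag_hit c n l y s));
    [reflexivity| |]; intros l Hl; apply Hlevel, Hl.
Qed.

Lemma ex_RInt_level_diff c n s M : 0 <= M -> ex_RInt (fun x => level_diff c n x s) 0 M.
Proof.
  intros HM; apply (ex_RInt_step _ (breakpoints c n s)); auto.
  intros x y _ Hxy _; apply level_diff_same, Hxy.
Qed.

Lemma min_bound_lt q k K L s E : 2 <= q -> 1 <= k -> 0 < K -> 0 < s <= L ->
  E <= s * (2 * K - 2 - k) ->
  E <= K * L - (k + 1) * s + (L - s) * (q * K - 2 * K - q + 1) ->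
  E < 2 * ((q - 1) / q) * (K * L - s).
Proof.
  intros Hq Hk HK Hs HE1 HE2.
  apply (Rmult_lt_reg_r q); [lra|].
  replace (2 * ((q - 1) / q) * (K * L - s) * q) with (2 * (q - 1) * (K * L - s)) by (field; lra).
  (* Whether the level-k DAG windows [a, a + L - s], spaced L / q apart, cover every x. *)
  destruct (Rle_lt_dec L (q * (L - s))) as [Hcover|Hgap].
  - assert (2 * K * L <= 2 * K * (q * (L - s))) by (apply Rmult_le_compat_l; lra).
    assert (0 < k * q * s) by (apply Rmult_lt_0_compat; [apply Rmult_lt_0_compat|]; lra).
    nra.
  - assert (0 <= (q - 2) * K * (L - q * (L - s)))
      by (apply Rmult_le_pos; [apply Rmult_le_pos|]; lra).
    assert (0 < s * (q * (k - 1) + 2)) by (apply Rmult_lt_0_compat; nra).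
    assert (0 <= q * (L - s) * (q - 1)) by (apply Rmult_le_pos; [apply Rmult_le_pos|]; lra).
    assert (2 * (q - 1) * (K * L - s)
            - q * (K * L - (k + 1) * s + (L - s) * (q * K - 2 * K - q + 1))
            = (q - 2) * K * (L - q * (L - s)) + s * (q * (k - 1) + 2) + q * (L - s) * (q - 1))
      by ring.
    nra.
Qed.

Section FittingLevel.

Variables (c n k : nat) (s : R).
Hypothesis Hk : (1 <= k <= n)%nat.
Hypothesis fits : node_len n (S k) < s <= node_len n k.

Let Hs : 0 < s.
Proof. pose proof (node_len_pos n (S k)); lra. Qed.

Let HN : NN n = 2 ^ k * node_len n k.
Proof. symmetry; apply pow2_mul_node_len; lia. Qed.

Let HNs : 0 <= NN n - s.
Proof. rewrite HN; pose proof (node_len_pos n k); pose proof (pow_R1_Rle 2 k ltac:(lra)); nra. Qed.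

Lemma RInt_level_diff_le_tree :
  RInt (fun x => level_diff c n x s) 0 (NN n - s) <= s * (2 * 2 ^ k - 2 - INR k).
Proof.
  replace (s * (2 * 2 ^ k - 2 - INR k))
    with ((NN n - s - 0) * INR k - (INR k * NN n - s * (2 * 2 ^ k - 2))) by ring.
  apply (RInt_le_is_RInt _ (fun x => INR k - rsum (seq 1 k) (fun l => tree_count n l x s)));
    [lra|apply ex_RInt_level_diff; lra| |].
  - apply (is_RInt_minus (V := R_NormedModule)); [apply is_RInt_const_R|].
    apply is_RInt_tree_levels; [lia|lra].
  - intros x _; unfold level_diff.
    pose proof (le_INR _ _ (level_dag_le c n k x s (proj1 fits))).
    pose proof (level_tree_ge n k x s ltac:(lia) Hs); lra.
Qed.

Lemma RInt_level_diff_le_dag : (2 <= c)%nat ->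
  RInt (fun x => level_diff c n x s) 0 (NN n - s)
  <= 2 ^ k * node_len n k - (INR k + 1) * s
     + (node_len n k - s) * ((INR c - 1) * 2 ^ k - 2 * 2 ^ k - (INR c - 1) + 1).
Proof.
  intros Hc.
  replace (2 ^ k * node_len n k - (INR k + 1) * s
           + (node_len n k - s) * ((INR c - 1) * 2 ^ k - 2 * 2 ^ k - (INR c - 1) + 1))
    with ((NN n - s - 0) * (INR k - 1)
          + ((INR c - 1) * 2 ^ k - (INR c - 1) + 1) * (node_len n k - s)
          - (INR k * NN n - s * (2 * 2 ^ k - 2))) by (rewrite HN; ring).
  apply (RInt_le_is_RInt _ (fun x => INR k - 1 + dag_count c n k x s
                                     - rsum (seq 1 k) (fun l => tree_count n l x s)));
    [lra|apply ex_RInt_level_diff; lra| |].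
  - apply (is_RInt_minus (V := R_NormedModule)); [apply (is_RInt_plus (V := R_NormedModule))|].
    + apply is_RInt_const_R.
    + apply is_RInt_dag_count; [lia|lia|lra].
    + apply is_RInt_tree_levels; [lia|lra].
  - intros x _; unfold level_diff.
    pose proof (level_dag_le_pred c n k x s (proj1 fits) (proj1 Hk)).
    pose proof (b2R_dag_hit_le c n k x s).
    pose proof (level_tree_ge n k x s ltac:(lia) Hs); lra.
Qed.

Lemma expect_Is_lt_fitting : (3 <= c)%nat ->
  expect_Is c n s < 2 * ((INR c - 2) / (INR c - 1)).
Proof.
  intros Hc.
  pose proof RInt_level_diff_le_tree as Htree.
  pose proof (RInt_level_diff_le_dag ltac:(lia)) as Hdag.
  assert (HK : 2 <= 2 ^ k)
    by (replace k with (S (k - 1)) by lia; pose proof (pow_R1_Rle 2 (k - 1) ltac:(lra)); simpl; lra).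
  assert (Hq : 2 <= INR c - 1) by (apply le_INR in Hc; simpl in Hc; lra).
  pose proof (node_len_pos n k).
  unfold expect_Is; destruct (Req_EM_T s (NN n)) as [Heq|_]; [rewrite HN in Heq; nra|].
  apply Rlt_div_l; [rewrite HN; nra|].
  rewrite HN at 2; replace (INR c - 2) with (INR c - 1 - 1) by ring.
  apply (min_bound_lt _ (INR k)); [lra|apply (le_INR 1); lia|lra|lra|exact Htree|exact Hdag].
Qed.

End FittingLevel.

Lemma level_tree_point n i : (i < 2 ^ (n + 1))%nat -> level_tree n (INR i) 1 = (n + 1)%nat.
Proof.
  intros Hi; apply max_level_top, existsb_exists; exists i; split; [apply in_seq; lia|].
  apply contains_iff; unfold node_len; rewrite Nat.sub_diag; simpl; lra.
Qed.

Lemma level_dag_point c n i : (2 <= c)%nat -> (i < 2 ^ (n + 1))%nat ->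
  level_dag c n (INR i) 1 = (n + 1)%nat.
Proof.
  intros Hc Hi; apply max_level_top, existsb_exists; exists (i * (c - 1))%nat; split;
    [apply in_seq; nia|].
  apply contains_iff; unfold node_len; rewrite Nat.sub_diag, mult_INR, minus_INR by lia.
  change (INR 1) with 1; assert (1 <= INR c - 1) by (apply le_INR in Hc; simpl in Hc; lra).
  replace (INR i * (INR c - 1) * (2 ^ 0 / (INR c - 1))) with (INR i) by (field; lra).
  simpl; lra.
Qed.

Lemma expect_I1_eq0 c n : (2 <= c)%nat -> expect_I1 c n = 0.
Proof.
  intros Hc; unfold expect_I1; rewrite sum_eq_R0; [unfold Rdiv; ring|].
  intros i Hi; assert (1 <= 2 ^ (n + 1))%nat by (apply Nat.le_succ_l, Nat.neq_0_lt_0, Nat.pow_nonzero; lia).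
  unfold level_diff; rewrite level_tree_point, level_dag_point by lia; ring.
Qed.

Lemma expect_Is_eq0 c n s : node_len n 1 < s -> expect_Is c n s = 0.
Proof.
  intros Hs.
  assert (Hzero : forall x, level_diff c n x s = 0).
  { intros x; unfold level_diff.
    rewrite (proj1 (Nat.le_0_r _) (level_dag_le c n 0 x s Hs)),
      (proj1 (Nat.le_0_r _) (level_tree_le n 0 x s Hs)); ring. }
  unfold expect_Is; destruct (Req_EM_T s (NN n)); [apply Hzero|].
  rewrite (RInt_ext _ (fun _ => 0)) by (intros; apply Hzero).
  rewrite RInt_const; unfold scal; simpl; unfold mult; simpl; unfold Rdiv; ring.
Qed.

Theorem theorem2 (n alpha : nat) (Halpha : (1 <= alpha)%nat) :
  let c := (2 ^ alpha + 1)%nat in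
  expect_I1 c n = 0 /\
  (forall s : R, 1 < s <= NN n ->
     expect_Is c n s < 2 * ((INR c - 2) / (INR c - 1))).
Proof.
  intros c.
  assert (Hc : (3 <= c)%nat) by (pose proof (Nat.pow_le_mono_r 2 1 alpha ltac:(lia) Halpha); unfold c; simpl in *; lia).
  split; [apply expect_I1_eq0; lia|].
  intros s [Hs1 HsN].
  destruct (exists_fitting_level n s Hs1 HsN) as [[|k] [Hk Hfit]].
  - rewrite expect_Is_eq0 by apply Hfit.
    apply Rmult_lt_0_compat; [lra|apply Rdiv_lt_0_compat; apply le_INR in Hc; simpl in Hc; lra].
  - apply (expect_Is_lt_fitting c n (S k)); [lia|exact Hfit|exact Hc].
Qed.
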